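(* Assume the Riccati solution $\bar{\mathbf{P}}_{1:s}$ exists and $\bar{\mathbf{P}}_i \succ 0$ for all $i$. Then, (i) there exists a unique Riccati solution $\hat{\mathbf{P}}_{1:r}$ in $\mathbb{S}_r^+$; (ii) $\hat{\mathbf{P}}_k = \bar{\mathbf{P}}_i$ and $\hat{\mathbf{K}}_k = \bar{\mathbf{K}}_i$ for any $i \in \hat{\Omega}_k$, for any $k$.
   Context: $\Sigma$ is an MJS $\mathbf{x}_{t+1}=\mathbf{A}_{\omega_t}\mathbf{x}_t+\mathbf{B}_{\omega_t}\mathbf{u}_t$ with $s$ modes and Markov matrix $\mathbf{T}$. Given a partition $\hat{\Omega}_{1:r}$ of $[s]$, the reduced MJS $\hat{\Sigma}$ has $r$ modes with $\hat{\mathbf{A}}_k,\hat{\mathbf{B}}_k$ the averages of $\mathbf{A}_i,\mathbf{B}_i$ over $i\in\hat{\Omega}_k$ and $\hat{\mathbf{T}}(k,l)=\frac{1}{|\hat{\Omega}_k|}\sum_{i\in\hat{\Omega}_k,j\in\hat{\Omega}_l}\mathbf{T}(i,j)$. The expanded MJS $\bar{\Sigma}$ has $s$ modes with $\bar{\mathbf{A}}_i=\hat{\mathbf{A}}_k$, $\bar{\mathbf{B}}_i=\hat{\mathbf{B}}_k$ for $i\in\hat{\Omega}_k$, and Markov matrix $\bar{\mathbf{T}}$ with $\sum_{j\in\hat{\Omega}_l}\bar{\mathbf{T}}(i,j)=\hat{\mathbf{T}}(k,l)$ for all $i\in\hat{\Omega}_k$. Fix cost matrices $\mathbf{Q}\succ0$,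 $\mathbf{R}\succ0$. Let $\mathbb{S}_m^+$ be the set of $m$-tuples of $n\times n$ PSD matrices. For an MJS with matrices $(\mathbf{A}_i,\mathbf{B}_i)$ and Markov matrix $\mathbf{T}$, define $\varphi_i(\mathbf{X}_{1:m})=\sum_j\mathbf{T}(i,j)\mathbf{X}_j$, $\mathcal{K}_i(\mathbf{X})=-(\mathbf{R}+\mathbf{B}_i^\top\varphi_i(\mathbf{X})\mathbf{B}_i)^{-1}\mathbf{B}_i^\top\varphi_i(\mathbf{X})\mathbf{A}_i$, and $\mathcal{R}_i(\mathbf{X})=\mathbf{Q}+\mathbf{A}_i^\top\varphi_i(\mathbf{X})\mathbf{A}_i-\mathbf{A}_i^\top\varphi_i(\mathbf{X})^\top\mathbf{B}_i(\mathbf{R}+\mathbf{B}_i^\top\varphi_i(\mathbf{X})\mathbf{B}_i)^{-1}\mathbf{B}_i^\top\varphi_i(\mathbf{X})\mathbf{A}_i$. A Riccati solution is $\mathbf{P}_{1:m}$ with $\mathbf{P}_i=\mathcal{R}_i(\mathbf{P}_{1:m})$ for all $i$ (coupled Riccati equations), and the corresponding LQR gains are $\mathbf{K}_i=\mathcal{K}_i(\mathbf{P}_{1:m})$. $\bar{\mathbf{P}}_{1:s},\bar{\mathbf{K}}_{1:s}$ denote these for $\bar{\Sigma}$ and $\hat{\mathbf{P}}_{1:r},\hat{\mathbf{K}}_{1:r}$ for $\hat{\Sigma}$. *)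

From HB Require Import structures.
From mathcomp Require Import all_boot all_order all_algebra.
From mathcomp Require Import reals.
Set Implicit Arguments. Unset Strict Implicit. Unset Printing Implicit Defensive.
Import Order.TTheory GRing.Theory Num.Theory.
Local Open Scope ring_scope.

Definition posdef (R : realType) (n : nat) (M : 'M[R]_n) : Prop :=
  M^T = M /\ forall x : 'cV[R]_n, x != 0 -> 0 < (x^T *m M *m x) ord0 ord0.

Definition possemidef (R : realType) (n : nat) (M : 'M[R]_n) : Prop :=
  M^T = M /\ forall x : 'cV[R]_n, 0 <= (x^T *m M *m x) ord0 ord0.

Definition markov (R : realType) (s : nat) (T : 'M[R]_s) : Prop :=
  (forall i j, 0 <= T i j) /\ (forall i, \sum_j T i j = 1).

Definition is_partition (s r : nat) (Omega : 'I_r -> {set 'I_s}) : Prop :=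
  (forall k, Omega k != set0) /\
  (forall k l, k != l -> [disjoint Omega k & Omega l]) /\
  (forall i, exists k, i \in Omega k).

Definition phi (R : realType) (n m : nat) (T : 'M[R]_m)
    (X : 'I_m -> 'M[R]_n) (i : 'I_m) : 'M[R]_n :=
  \sum_j T i j *: X j.

Definition Kgain (R : realType) (n p m : nat)
    (A : 'I_m -> 'M[R]_n) (B : 'I_m -> 'M[R]_(n, p)) (Rc : 'M[R]_p)
    (T : 'M[R]_m) (X : 'I_m -> 'M[R]_n) (i : 'I_m) : 'M[R]_(p, n) :=
  - (invmx (Rc + (B i)^T *m phi T X i *m B i) *m (B i)^T *m phi T X i *m A i).

Definition Ric (R : realType) (n p m : nat)
    (A : 'I_m -> 'M[R]_n) (B : 'I_m -> 'M[R]_(n, p)) (Q : 'M[R]_n)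
    (Rc : 'M[R]_p) (T : 'M[R]_m) (X : 'I_m -> 'M[R]_n) (i : 'I_m) : 'M[R]_n :=
  Q + (A i)^T *m phi T X i *m A i
    - (A i)^T *m (phi T X i)^T *m B i
        *m invmx (Rc + (B i)^T *m phi T X i *m B i)
        *m (B i)^T *m phi T X i *m A i.

Definition riccati_sol (R : realType) (n p m : nat)
    (A : 'I_m -> 'M[R]_n) (B : 'I_m -> 'M[R]_(n, p)) (Q : 'M[R]_n)
    (Rc : 'M[R]_p) (T : 'M[R]_m) (P : 'I_m -> 'M[R]_n) : Prop :=
  forall i, P i = Ric A B Q Rc T P i.

Definition avg_mx (R : realType) (a b s r : nat)
    (Omega : 'I_r -> {set 'I_s}) (M : 'I_s -> 'M[R]_(a, b)) (k : 'I_r)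
    : 'M[R]_(a, b) :=
  (#|Omega k|%:R)^-1 *: \sum_(i in Omega k) M i.

Definition red_T (R : realType) (s r : nat)
    (Omega : 'I_r -> {set 'I_s}) (T : 'M[R]_s) : 'M[R]_r :=
  \matrix_(k, l) ((#|Omega k|%:R)^-1 *
                  \sum_(i in Omega k) \sum_(j in Omega l) T i j).

(* Since [Q] is positive definite, a Lyapunov argument along the closed loop
   shows that a positive semidefinite solution of the coupled Riccati equations
   lies below every positive semidefinite supersolution; in particular such
   solutions are unique.  Value iteration from [0] on the reduced system is
   nondecreasing, and its lift to the [s] modes is exactly value iteration on
   the expanded system, because the expanded data are constant on the blocks of
   the partition and the expanded transition mass into each block is the
   reduced one.  Hence it is bounded by [Pbar], converges, and its limit is a
   positive semidefinite solution of the reduced equations.  The lift of that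
   limit solves the expanded equations, so by uniqueness it is [Pbar]; the
   gains agree because they are computed from the same lifted data. *)

From HB Require Import structures.
From mathcomp Require Import all_boot all_order all_algebra.
From mathcomp Require Import classical_sets boolp reals topology normedtype sequences.
From mathcomp Require Import ring lra.
Set Implicit Arguments. Unset Strict Implicit. Unset Printing Implicit Defensive.
Import Order.TTheory GRing.Theory Num.Theory numFieldNormedType.Exports.
Local Open Scope classical_set_scope.
Local Open Scope ring_scope.

Section QuadraticForm.
Variable R : realType.

Definition qform n (M : 'M[R]_n) (x : 'cV[R]_n) : R := (x^T *m M *m x) 0 0.
Definition bform n (M : 'M[R]_n) (x y : 'cV[R]_n) : R := (x^T *m M *m y) 0 0.
Definition sqnorm n (x : 'cV[R]_n) : R := \sum_a x a 0 ^+ 2.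
Definition l1norm n (M : 'M[R]_n) : R := \sum_a \sum_b `|M a b|.

Variable n : nat.
Implicit Types (M N : 'M[R]_n) (x y : 'cV[R]_n).

Lemma qformE M x : qform M x = \sum_a \sum_b x a 0 * M a b * x b 0.
Proof.
rewrite /qform mxE exchange_big; apply: eq_bigr => b _.
by rewrite mxE big_distrl; apply: eq_bigr => a _; rewrite !mxE.
Qed.

Lemma qformD M N x : qform (M + N) x = qform M x + qform N x.
Proof. by rewrite /qform mulmxDr mulmxDl mxE. Qed.

Lemma qformZ (c : R) M x : qform (c *: M) x = c * qform M x.
Proof. by rewrite /qform -scalemxAr -scalemxAl mxE. Qed.

Lemma qformN M x : qform (- M) x = - qform M x.
Proof. by rewrite -scaleN1r qformZ mulN1r. Qed.

Lemma qformB M N x : qform (M - N) x = qform M x - qform N x.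
Proof. by rewrite qformD qformN. Qed.

Lemma qform0 x : qform 0 x = 0.
Proof. by rewrite /qform mulmx0 mul0mx mxE. Qed.

Lemma qformv0 M : qform M 0 = 0.
Proof. by rewrite /qform mulmx0 mxE. Qed.

Lemma qform_sum (I : finType) (F : I -> 'M[R]_n) x :
  qform (\sum_i F i) x = \sum_i qform (F i) x.
Proof. by elim/big_rec2: _ => [|i y M _ <-]; rewrite ?qform0 ?qformD. Qed.

Lemma qform_conj k (L : 'M[R]_(k, n)) (M : 'M[R]_k) x :
  qform (L^T *m M *m L) x = qform M (L *m x).
Proof. by rewrite /qform trmx_mul !mulmxA. Qed.

Lemma bform_sym M x y : M^T = M -> bform M x y = bform M y x.
Proof.
move=> sM; rewrite /bform.
have -> : x^T *m M *m y = (y^T *m M *m x)^T by rewrite !trmx_mul trmxK sM mulmxA.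
by rewrite mxE.
Qed.

Lemma qformDv M x y :
  qform M (x + y) = qform M x + bform M x y + bform M y x + qform M y.
Proof. by rewrite /qform /bform mulmxDr linearD !mulmxDl !mxE; ring. Qed.

Lemma qformZv M (t : R) x : qform M (t *: x) = t ^+ 2 * qform M x.
Proof.
rewrite /qform -scalemxAr linearZ -!scalemxAl !mxE /=; ring.
Qed.

Lemma sqnorm_ge0 x : 0 <= sqnorm x.
Proof. by apply: sumr_ge0 => a _; rewrite sqr_ge0. Qed.

Lemma sqr_coord_le_sqnorm x a : x a 0 ^+ 2 <= sqnorm x.
Proof.
rewrite /sqnorm (bigD1 a) //= lerDl; apply: sumr_ge0 => b _; exact: sqr_ge0.
Qed.

Lemma sqnorm_eq0 x : (sqnorm x == 0) = (x == 0).
Proof.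
apply/eqP/eqP => [x0|->]; last by rewrite /sqnorm big1 // => a _; rewrite mxE expr0n.
apply/matrixP => a b; rewrite (ord1 b) mxE; apply/eqP; rewrite -sqrf_eq0 eq_le sqr_ge0.
by rewrite -x0 sqr_coord_le_sqnorm.
Qed.

Lemma trmx_mul_self x : (x^T *m x) 0 0 = sqnorm x.
Proof. by rewrite mxE; apply: eq_bigr => a _; rewrite mxE expr2. Qed.

Lemma l1norm_ge0 M : 0 <= l1norm M.
Proof. by apply: sumr_ge0 => a _; apply: sumr_ge0. Qed.

Lemma abs_qform_le M x : `|qform M x| <= l1norm M * sqnorm x.
Proof.
rewrite qformE /l1norm mulr_suml; apply: le_trans (ler_norm_sum _ _ _) _.
apply: ler_sum => a _; rewrite mulr_suml; apply: le_trans (ler_norm_sum _ _ _) _.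
apply: ler_sum => b _; rewrite !normrM [_ * `|M a b|]mulrC -mulrA.
apply: ler_wpM2l => //.
have := sqr_coord_le_sqnorm x a; have := sqr_coord_le_sqnorm x b.
rewrite -[x a 0 ^+ 2]real_normK ?num_real // -[x b 0 ^+ 2]real_normK ?num_real //.
have := sqr_ge0 (`|x a 0| - `|x b 0|); nra.
Qed.

Lemma qform_le M x : qform M x <= l1norm M * sqnorm x.
Proof. exact: le_trans (ler_norm _) (abs_qform_le M x). Qed.

Lemma posdef_possemidef M : posdef M -> possemidef M.
Proof.
case=> sM pM; split=> // x; have [->|/pM/ltW //] := eqVneq x 0.
by rewrite mulmx0 mxE.
Qed.

Lemma psd_qform_ge0 M x : possemidef M -> 0 <= qform M x.
Proof. by case=> _; apply. Qed.

Lemma cauchy_schwarz_qform M x y : possemidef M -> 0 < qform M y ->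
  bform M x y ^+ 2 <= qform M x * qform M y.
Proof.
case=> sM pM qy_gt0; pose t := - bform M x y / qform M y.
have bxty : bform M x (t *: y) = t * bform M x y by rewrite /bform -scalemxAr mxE.
have := pM (x + t *: y); rewrite -/(qform M _) qformDv qformZv.
rewrite (bform_sym (t *: y) x sM) bxty.
have -> : qform M x + t * bform M x y + t * bform M x y + t ^+ 2 * qform M y
        = qform M x - bform M x y ^+ 2 / qform M y.
  by rewrite /t; field; rewrite gt_eqF.
by rewrite subr_ge0 ler_pdivrMr.
Qed.

Lemma posdef_unitmx M : posdef M -> M \in unitmx.
Proof.
case=> _ pM; rewrite unitmxE unitfE; apply/negP => /det0P [v v0 vM].
have : v^T != 0 by rewrite -(inj_eq trmx_inj) trmxK linear0.
by move=> /pM; rewrite trmxK vM mul0mx mxE ltxx.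
Qed.

(* Cauchy-Schwarz with [y = M^-1 x] gives [sqnorm x ^+ 2 <= qform M x * qform M y],
   while [qform M y <= l1norm M^-T * sqnorm x]. *)
Lemma posdef_coercive M : posdef M ->
  exists2 c, 0 < c & forall x, c * sqnorm x <= qform M x.
Proof.
move=> pdM; have uM := posdef_unitmx pdM; have psdM := posdef_possemidef pdM.
set k := l1norm (invmx M)^T; have k_ge0 : 0 <= k by apply: l1norm_ge0.
exists (k + 1)^-1; first by rewrite invr_gt0; lra.
move=> x; rewrite mulrC -ler_pdivlMr ?invr_gt0; last by lra.
rewrite invrK; have [->|x0] := eqVneq x 0.
  by rewrite qformv0 mul0r; move: (sqnorm_eq0 0); rewrite eqxx => /eqP ->.
set y := invmx M *m x.
have y0 : y != 0 by apply: contraNneq x0 => y0; rewrite -(mulKVmx uM x) -/y y0 mulmx0.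
have bxy : bform M x y = sqnorm x.
  by rewrite /bform /y mulmxA -(mulmxA _ M) mulmxV // mulmx1 trmx_mul_self.
have qy : qform M y <= k * sqnorm x.
  by rewrite /y -qform_conj -mulmxA mulmxV // mulmx1; apply: qform_le.
have cs := cauchy_schwarz_qform x psdM (proj2 pdM _ y0); rewrite bxy in cs.
have sx_gt0 : 0 < sqnorm x by rewrite lt_def sqnorm_eq0 x0 sqnorm_ge0.
have qx_ge0 : 0 <= qform M x := proj2 psdM x.
rewrite -(ler_pM2l sx_gt0) -expr2; nra.
Qed.

Lemma qform_le_coercive M N c x : 0 < c -> (forall y, c * sqnorm y <= qform N y) ->
  qform M x <= l1norm M / c * qform N x.
Proof.
move=> c_gt0 N_coercive; apply: le_trans (qform_le M x) _.
by rewrite mulrAC -mulrA ler_wpM2l ?l1norm_ge0 // ler_pdivlMr // mulrC.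
Qed.

Lemma qform_polar M a b : M^T = M ->
  M a b = (qform M (delta_mx a 0 + delta_mx b 0)
           - qform M (delta_mx a 0) - qform M (delta_mx b 0)) / 2.
Proof.
move=> sM; rewrite qformDv (bform_sym (delta_mx b 0) _ sM).
have -> : bform M (delta_mx a 0) (delta_mx b 0) = M a b.
  by rewrite /bform trmx_delta -rowE -colE !mxE.
set u := qform M (delta_mx a 0); set v := qform M (delta_mx b 0).
by field.
Qed.

Lemma qform_inj M N : M^T = M -> N^T = N -> (forall x, qform M x = qform N x) ->
  M = N.
Proof.
by move=> sM sN eqMN; apply/matrixP => a b; rewrite qform_polar // [RHS]qform_polar // !eqMN.
Qed.
End QuadraticForm.

Section EntrywiseLimits.
Variables (R : realType) (n : nat) (M_ : nat -> 'M[R]_n) (M : 'M[R]_n).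
Hypothesis M_cvg : forall a b, M_ N a b @[N --> \oo] --> M a b.

Lemma qform_cvg x : qform (M_ N) x @[N --> \oo] --> qform M x.
Proof.
under eq_cvg do rewrite qformE; rewrite qformE.
apply: cvg_big => [|a _]; first exact: add_continuous.
apply: cvg_big => [|b _]; first exact: add_continuous.
by apply: cvgM; [apply: cvgM; [exact: cvg_cst | exact: M_cvg] | exact: cvg_cst].
Qed.

Lemma l1norm_cvg0 : l1norm (M - M_ N) @[N --> \oo] --> 0.
Proof.
have -> : 0 = \sum_(a < n) \sum_(b < n) `|M a b - M a b| :> R.
  by rewrite big1 // => a _; rewrite big1 // => b _; rewrite subrr normr0.
apply: cvg_big => [|a _]; first exact: add_continuous.
apply: cvg_big => [|b _]; first exact: add_continuous.
have entry N : `|(M - M_ N) a b| = `|M a b - M_ N a b| by rewrite !mxE.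
by rewrite (eq_cvg _ _ entry); exact: cvg_norm (cvgB (cvg_cst _) (@M_cvg a b)).
Qed.
End EntrywiseLimits.

Definition psd_family (R : realType) (n m : nat) (X : 'I_m -> 'M[R]_n) :=
  forall i, possemidef (X i).

Definition loewner_le (R : realType) (n m : nat) (X Y : 'I_m -> 'M[R]_n) :=
  forall i x, qform (X i) x <= qform (Y i) x.

Lemma qform_phi (R : realType) (n m : nat) (T : 'M[R]_m) (X : 'I_m -> 'M[R]_n) i y :
  qform (phi T X i) y = \sum_j T i j * qform (X j) y.
Proof. by rewrite qform_sum; apply: eq_bigr => j _; rewrite qformZ. Qed.

Lemma qform_family_le_coercive (R : realType) (n m : nat) (D : 'I_m -> 'M[R]_n)
    (Q : 'M[R]_n) c j x :
  0 < c -> (forall y, c * sqnorm y <= qform Q y) ->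
  qform (D j) x <= (\sum_l l1norm (D l)) / c * qform Q x.
Proof.
move=> c_gt0 Q_coercive; apply: le_trans (qform_le_coercive _ x c_gt0 Q_coercive) _.
apply: ler_wpM2r; first exact: le_trans (mulr_ge0 (ltW c_gt0) (sqnorm_ge0 x)) (Q_coercive x).
apply: ler_wpM2r; first by rewrite invr_ge0 ltW.
by rewrite (bigD1 j) //= lerDl sumr_ge0 // => l _; apply: l1norm_ge0.
Qed.

Lemma le0_of_natmul_bounded (R : archiRealFieldType) (d C : R) :
  (forall N, d *+ N <= C) -> d <= 0.
Proof.
move=> bdd; rewrite leNgt; apply/negP => d_gt0.
have C_ge0 : 0 <= C by apply: le_trans (bdd 0%N); rewrite mulr0n.
have := archi_boundP (divr_ge0 C_ge0 (ltW d_gt0)).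
by rewrite ltr_pdivrMr // mulr_natl ltNge bdd.
Qed.

Section ClosedLoop.
Variables (R : realType) (n m : nat) (T : 'M[R]_m) (L : 'I_m -> 'M[R]_n).
Hypothesis T_ge0 : forall i j, 0 <= T i j.
Implicit Types (X Y : 'I_m -> 'M[R]_n) (i : 'I_m) (x : 'cV[R]_n).

Definition closed_loop X i := (L i)^T *m phi T X i *m L i.

Lemma qform_closed_loop X i x :
  qform (closed_loop X i) x = \sum_j T i j * qform (X j) (L i *m x).
Proof. by rewrite qform_conj qform_phi. Qed.

Lemma closed_loop_mono X Y : loewner_le X Y -> loewner_le (closed_loop X) (closed_loop Y).
Proof.
by move=> XY i x; rewrite !qform_closed_loop; apply: ler_sum => j _; apply: ler_wpM2l.
Qed.

Lemma iter_closed_loop_mono N X Y :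
  loewner_le X Y -> loewner_le (iter N closed_loop X) (iter N closed_loop Y).
Proof. by move=> XY; elim: N => //= N; apply: closed_loop_mono. Qed.

Lemma qform_iter_closed_loopD N X Y i x :
  qform (iter N closed_loop (fun j => X j + Y j) i) x
  = qform (iter N closed_loop X i) x + qform (iter N closed_loop Y i) x.
Proof.
elim: N i x => [|N IH] i x /=; first by rewrite qformD.
rewrite !qform_closed_loop -big_split; apply: eq_bigr => j _; by rewrite IH mulrDr.
Qed.

Lemma qform_iter_closed_loopZ N (c : R) X i x :
  qform (iter N closed_loop (fun j => c *: X j) i) x = c * qform (iter N closed_loop X i) x.
Proof.
elim: N i x => [|N IH] i x /=; first by rewrite qformZ.
rewrite !qform_closed_loop mulr_sumr; apply: eq_bigr => j _; rewrite IH; ring.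
Qed.

Lemma iter_closed_loop_ge0 N X : (forall i x, 0 <= qform (X i) x) ->
  forall i x, 0 <= qform (iter N closed_loop X i) x.
Proof.
move=> X_ge0; elim: N => //= N IH i x; rewrite qform_closed_loop.
by apply: sumr_ge0 => j _; apply: mulr_ge0.
Qed.

(* [D <= L^N D <= k L^N Q] for all [N], while the partial sums of [L^l Q]
   are bounded by [P]; hence [N D <= k P] for every [N]. *)
Lemma closed_loop_subinvariant_nonpos (Q : 'M[R]_n) (D P : 'I_m -> 'M[R]_n) :
  posdef Q -> loewner_le D (closed_loop D) ->
  (forall i x, qform Q x + qform (closed_loop P i) x <= qform (P i) x) ->
  (forall i x, 0 <= qform (P i) x) ->
  forall i x, qform (D i) x <= 0.
Proof.
move=> Q_posdef D_sub P_super P_ge0 i x.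
have [c c_gt0 Q_coercive] := posdef_coercive Q_posdef.
pose Qf := fun _ : 'I_m => Q.
pose S := \sum_j l1norm (D j); pose k := S / c.
have S_ge0 : 0 <= S by apply: sumr_ge0 => j _; apply: l1norm_ge0.
have D_le_Q : loewner_le D (fun _ => k *: Q).
  by move=> j y; rewrite qformZ; apply: qform_family_le_coercive.
have D_le_iter N : loewner_le D (iter N closed_loop D).
  elim: N => [|N IH] //= j y; apply: le_trans (D_sub j y) _; exact: closed_loop_mono.
have iter_D_le N j y :
    qform (iter N closed_loop D j) y <= k * qform (iter N closed_loop Qf j) y.
  by rewrite -qform_iter_closed_loopZ; apply: iter_closed_loop_mono.
have partial_sums_le N j y :
    \sum_(l < N) qform (iter l closed_loop Qf j) y + qform (iter N closed_loop P j) y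
    <= qform (P j) y.
  elim: N j y => [|N IH] j y; first by rewrite big_ord0 add0r.
  apply: le_trans (IH j y); rewrite big_ord_recr -addrA lerD2l iterSr.
  rewrite -qform_iter_closed_loopD; apply: iter_closed_loop_mono => l z.
  by rewrite qformD; apply: P_super.
apply: (@le0_of_natmul_bounded _ _ (k * qform (P i) x)) => N.
have -> : qform (D i) x *+ N = \sum_(l < N) qform (D i) x by rewrite sumr_const card_ord.
apply: (@le_trans _ _ (\sum_(l < N) k * qform (iter l closed_loop Qf i) x)).
  by apply: ler_sum => l _; apply: le_trans (D_le_iter l i x) (iter_D_le l i x).
rewrite -mulr_sumr ler_wpM2l ?divr_ge0 ?(ltW c_gt0) //.
apply: le_trans (partial_sums_le N i x); rewrite lerDl; exact: iter_closed_loop_ge0.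
Qed.
End ClosedLoop.

Section Riccati.
Variables (R : realType) (n p m : nat).
Variables (A : 'I_m -> 'M[R]_n) (B : 'I_m -> 'M[R]_(n, p)).
Variables (Q : 'M[R]_n) (Rc : 'M[R]_p) (T : 'M[R]_m).
Hypothesis T_ge0 : forall i j, 0 <= T i j.
Hypothesis Q_posdef : posdef Q.
Hypothesis Rc_posdef : posdef Rc.

Local Notation ric := (Ric A B Q Rc T).
Local Notation gain := (Kgain A B Rc T).
Implicit Types (X Y : 'I_m -> 'M[R]_n) (i : 'I_m) (x : 'cV[R]_n) (K : 'M[R]_(p, n)).

Definition bellman X i K x :=
  qform Q x + qform Rc (K *m x) + qform (phi T X i) ((A i + B i *m K) *m x).

Lemma qform_Q_ge0 x : 0 <= qform Q x.
Proof. exact/psd_qform_ge0/posdef_possemidef. Qed.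

Lemma qform_Rc_ge0 (u : 'cV[R]_p) : 0 <= qform Rc u.
Proof. exact/psd_qform_ge0/posdef_possemidef. Qed.

Lemma phi_psd X i : psd_family X -> possemidef (phi T X i).
Proof.
move=> psdX; split.
  by rewrite linear_sum; apply: eq_bigr => j _; rewrite linearZ /= (proj1 (psdX j)).
move=> y; rewrite -/(qform _ y) qform_phi; apply: sumr_ge0 => j _.
exact: mulr_ge0 (T_ge0 i j) (proj2 (psdX j) y).
Qed.

Lemma gain_denom_posdef X i : psd_family X -> posdef (Rc + (B i)^T *m phi T X i *m B i).
Proof.
move=> psdX; split.
  by rewrite linearD /= (proj1 Rc_posdef) !trmx_mul trmxK (proj1 (phi_psd i psdX)) mulmxA.
move=> u u0; rewrite -/(qform _ u) qformD qform_conj.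
exact: ltr_wpDr (psd_qform_ge0 _ (phi_psd i psdX)) (proj2 Rc_posdef u u0).
Qed.

Lemma bellman_completion X i K x : psd_family X ->
  bellman X i K x = qform (ric X i) x
    + qform (Rc + (B i)^T *m phi T X i *m B i) ((K - gain X i) *m x).
Proof.
move=> psdX; have W_pd := gain_denom_posdef i psdX.
have uW := posdef_unitmx W_pd; have sW := proj1 W_pd.
have sP := proj1 (phi_psd i psdX).
move: sW uW; rewrite /bellman /Ric /Kgain.
set P := phi T X i; set W := Rc + _; set G := (B i)^T *m P *m A i => sW uW.
set Ks := - (invmx W *m (B i)^T *m P *m A i).
have WKs : W *m Ks = - G by rewrite mulmxN !mulmxA (mulmxV uW) mul1mx.
have KsW : Ks^T *m W = - ((A i)^T *m P *m B i).
  by rewrite -[in LHS]sW -trmx_mul WKs /G linearN /= !trmx_mul trmxK sP mulmxA.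
have e1 : K^T *m W *m Ks = - (K^T *m G) by rewrite -mulmxA WKs mulmxN.
have e2 : Ks^T *m W *m K = - ((A i)^T *m P *m B i *m K) by rewrite KsW mulNmx.
have e3 : Ks^T *m W *m Ks = (A i)^T *m P^T *m B i *m invmx W *m (B i)^T *m P *m A i.
  by rewrite KsW mulNmx /Ks mulmxN opprK sP !mulmxA.
have e4 : K^T *m W *m K = K^T *m Rc *m K + K^T *m (B i)^T *m P *m B i *m K.
  by rewrite /W mulmxDr mulmxDl !mulmxA.
clearbody Ks W; rewrite -!qform_conj.
rewrite !(raddfD trmx, raddfB trmx) /= !(mulmxDl, mulmxDr, mulmxBl, mulmxBr) !qformD ?qformN.
rewrite !(raddfN trmx) /= !(mulNmx, mulmxN) ?opprK e1 e2 e3 e4.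
rewrite !trmx_mul ?qformN !qformD /G !mulmxA.
lra.
Qed.

Lemma Ric_le_bellman X i K x : psd_family X -> qform (ric X i) x <= bellman X i K x.
Proof.
move=> psdX; rewrite bellman_completion // lerDl qformD qform_conj.
exact: addr_ge0 (qform_Rc_ge0 _) (psd_qform_ge0 _ (phi_psd i psdX)).
Qed.

Lemma Ric_bellman X i x : psd_family X -> qform (ric X i) x = bellman X i (gain X i) x.
Proof. by move=> psdX; rewrite bellman_completion // subrr mul0mx qformv0 addr0. Qed.

Lemma Q_le_Ric X i x : psd_family X -> qform Q x <= qform (ric X i) x.
Proof.
move=> psdX; rewrite Ric_bellman // /bellman -addrA lerDl.
exact: addr_ge0 (qform_Rc_ge0 _) (psd_qform_ge0 _ (phi_psd i psdX)).
Qed.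

Lemma Ric_psd X : psd_family X -> psd_family (ric X).
Proof.
move=> psdX i; split; last first.
  by move=> x; apply: le_trans (Q_le_Ric i x psdX); exact: qform_Q_ge0.
have sP := proj1 (phi_psd i psdX); have sW := proj1 (gain_denom_posdef i psdX).
rewrite /Ric !(raddfB trmx, raddfD trmx) /= !trmx_mul !trmxK trmx_inv sW sP.
by rewrite (proj1 Q_posdef) !mulmxA.
Qed.

Lemma Ric_mono X Y : psd_family X -> psd_family Y -> loewner_le X Y ->
  loewner_le (ric X) (ric Y).
Proof.
move=> psdX psdY XY i x; rewrite [leRHS]Ric_bellman //.
apply: le_trans (Ric_le_bellman i (gain Y i) x psdX) _; rewrite lerD2l !qform_phi.
by apply: ler_sum => j _; apply: ler_wpM2l.
Qed.

Lemma riccati_sol_le_supersol (P P' : 'I_m -> 'M[R]_n) (K : 'I_m -> 'M[R]_(p, n)) :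
  riccati_sol A B Q Rc T P -> psd_family P -> psd_family P' ->
  (forall i x, bellman P' i (K i) x <= qform (P' i) x) ->
  loewner_le P P'.
Proof.
move=> solP psdP psdP' P'_super.
pose L i := A i + B i *m K i.
suff D_nonpos : forall i x, qform (P i - P' i) x <= 0.
  by move=> i x; move: (D_nonpos i x); rewrite qformB subr_le0.
apply: (closed_loop_subinvariant_nonpos (L := L) T_ge0 Q_posdef (P := P')).
- move=> i x; rewrite qform_closed_loop qformB.
  have := Ric_le_bellman i (K i) x psdP; rewrite -solP.
  have := P'_super i x; rewrite /bellman !qform_phi.
  have -> : \sum_j T i j * qform (P j - P' j) (L i *m x)
          = \sum_j T i j * qform (P j) (L i *m x) - \sum_j T i j * qform (P' j) (L i *m x).
    by rewrite -sumrB; apply: eq_bigr => j _; rewrite qformB mulrBr.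
  rewrite /L; lra.
- move=> i x; rewrite /closed_loop qform_conj; apply: le_trans (P'_super i x).
  by rewrite /bellman lerD2r lerDl qform_Rc_ge0.
- by move=> i x; apply: psd_qform_ge0.
Qed.

Lemma riccati_sol_psd_unique (P P' : 'I_m -> 'M[R]_n) :
  riccati_sol A B Q Rc T P -> psd_family P ->
  riccati_sol A B Q Rc T P' -> psd_family P' -> P = P'.
Proof.
have le_sol X Y : riccati_sol A B Q Rc T X -> psd_family X ->
    riccati_sol A B Q Rc T Y -> psd_family Y -> loewner_le X Y.
  move=> solX psdX solY psdY; apply: (riccati_sol_le_supersol (K := gain Y)) => // i x.
  by rewrite -Ric_bellman // -solY.
move=> solP psdP solP' psdP'; apply/funext => i.
apply: qform_inj; [exact: (proj1 (psdP i)) | exact: (proj1 (psdP' i)) |] => x.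
by apply/eqP; rewrite eq_le le_sol // le_sol.
Qed.

Lemma bellman_le_scale X Y i K x (t : R) : 1 <= t ->
  (forall j z, qform (X j) z <= t * qform (Y j) z) ->
  bellman X i K x <= t * bellman Y i K x.
Proof.
move=> t_ge1 XY; rewrite /bellman !mulrDr !qform_phi mulr_sumr.
have cost_ge0 : 0 <= qform Q x + qform Rc (K *m x) by rewrite addr_ge0 ?qform_Q_ge0 ?qform_Rc_ge0.
apply: lerD; first by rewrite -mulrDr ler_peMl.
apply: ler_sum => j _; rewrite mulrCA; exact: ler_wpM2l.
Qed.

Definition value_iter N : 'I_m -> 'M[R]_n := iter N ric (fun _ => 0).

Lemma value_iter_psd N : psd_family (value_iter N).
Proof.
elim: N => [|N IH] /=; last exact: Ric_psd.
by move=> i /=; split=> [|x]; rewrite ?trmx0 // mulmx0 mul0mx mxE.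
Qed.

Lemma value_iter_le_succ N : loewner_le (value_iter N) (value_iter N.+1).
Proof.
elim: N => [|N IH] i x; last exact: Ric_mono (value_iter_psd _) (value_iter_psd _) IH i x.
by rewrite qform0; apply: psd_qform_ge0; apply: value_iter_psd.
Qed.

Lemma value_iter_le_sol P N : riccati_sol A B Q Rc T P -> psd_family P ->
  loewner_le (value_iter N) P.
Proof.
move=> solP psdP; elim: N => [|N IH] i x.
  by rewrite qform0; apply: psd_qform_ge0.
by rewrite solP; apply: Ric_mono IH i x => //; apply: value_iter_psd.
Qed.

Section ValueIterationLimit.
Hypothesis value_iter_bounded : forall i x, exists C, forall N, qform (value_iter N i) x <= C.

Lemma qform_value_iter_nondecreasing i x :
  nondecreasing_seq (fun N => qform (value_iter N i) x).
Proof. by apply/nondecreasing_seqP => N; apply: value_iter_le_succ. Qed.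

Lemma qform_value_iter_is_cvg i x : cvgn (fun N => qform (value_iter N i) x).
Proof.
apply: nondecreasing_is_cvgn; first exact: qform_value_iter_nondecreasing.
by have [C leC] := value_iter_bounded i x; exists C => _ [N _ <-].
Qed.

Definition value_lim i : 'M[R]_n := \matrix_(a, b) limn (fun N => value_iter N i a b).

Lemma value_iter_entry_cvg i a b : value_iter N i a b @[N --> \oo] --> value_lim i a b.
Proof.
suff : cvgn (fun N => value_iter N i a b) by rewrite mxE.
have -> : (fun N => value_iter N i a b) = fun N =>
    (qform (value_iter N i) (delta_mx a 0 + delta_mx b 0)
     - qform (value_iter N i) (delta_mx a 0) - qform (value_iter N i) (delta_mx b 0)) / 2.
  by apply/funext => N; apply: qform_polar; case: (value_iter_psd N i).
apply: is_cvgM; last exact: is_cvg_cst.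
by apply: is_cvgB; [apply: is_cvgB|]; apply: qform_value_iter_is_cvg.
Qed.

Lemma qform_value_iter_cvg i x : qform (value_iter N i) x @[N --> \oo] --> qform (value_lim i) x.
Proof. by apply: qform_cvg => a b; apply: value_iter_entry_cvg. Qed.

Lemma value_iter_le_lim N : loewner_le (value_iter N) value_lim.
Proof.
move=> i x; rewrite -(cvg_lim _ (@qform_value_iter_cvg i x)) //.
exact: nondecreasing_cvgn_le (qform_value_iter_nondecreasing i x)
  (@qform_value_iter_is_cvg i x) N.
Qed.

Lemma value_lim_le i x C : (forall N, qform (value_iter N i) x <= C) ->
  qform (value_lim i) x <= C.
Proof.
move=> leC; rewrite -(cvg_lim _ (@qform_value_iter_cvg i x)) //.
by apply: limr_le; [exact: qform_value_iter_is_cvg | near=> N; apply: leC].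
Unshelve. all: by end_near.
Qed.

Lemma value_lim_psd : psd_family value_lim.
Proof.
move=> i; split; last first.
  by move=> x; apply: le_trans (value_iter_le_lim 0 i x); rewrite qform0.
apply/matrixP => a b; rewrite !mxE.
have -> // : (fun N => value_iter N i b a) = (fun N => value_iter N i a b).
by apply/funext => N; case: (value_iter_psd N i) => /matrixP/(_ a b) + _; rewrite mxE.
Qed.

(* Once [N > 0], [value_iter N >= Q] absorbs the entrywise error
   [value_lim - value_iter N], scaled by the coercivity constant [c] of [Q]. *)
Lemma Ric_value_lim_le c N i x : 0 < c -> (forall z, c * sqnorm z <= qform Q z) ->
  (0 < N)%N ->
  qform (ric value_lim i) x
  <= (1 + (\sum_j l1norm (value_lim j - value_iter N j)) / c) * qform (value_lim i) x.
Proof.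
move=> c_gt0 Q_coercive; case: N => // N _.
set S := \sum_j _; have S_ge0 : 0 <= S by apply: sumr_ge0 => j _; apply: l1norm_ge0.
have d_ge0 : 0 <= S / c by rewrite divr_ge0 // ltW.
set K := gain (value_iter N.+1) i.
apply: le_trans (Ric_le_bellman i K x value_lim_psd) _.
apply: (@le_trans _ _ ((1 + S / c) * bellman (value_iter N.+1) i K x)).
  apply: bellman_le_scale => [|j z]; first by rewrite lerDl.
  rewrite mulrDl mul1r -lerBlDl.
  have := qform_family_le_coercive (fun l => value_lim l - value_iter N.+1 l) j z
    c_gt0 Q_coercive.
  rewrite qformB => /le_trans; apply.
  by apply: ler_wpM2l => //; apply: Q_le_Ric; apply: value_iter_psd.
rewrite -Ric_bellman; last exact: value_iter_psd.
by apply: ler_wpM2l; [rewrite addr_ge0 | exact: (value_iter_le_lim N.+2)].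
Qed.

Lemma value_lim_riccati : riccati_sol A B Q Rc T value_lim.
Proof.
have [c c_gt0 Q_coercive] := posdef_coercive Q_posdef.
pose d N := (\sum_j l1norm (value_lim j - value_iter N j)) / c.
have d_cvg0 : d N @[N --> \oo] --> 0.
  have sum0 : \sum_(j < m) (0 : R) = 0 by rewrite big1.
  rewrite -(mul0r c^-1) -{1}sum0; apply: cvgM; last exact: cvg_cst.
  apply: cvg_big => [|j _]; first exact: add_continuous.
  by apply: l1norm_cvg0 => a b; apply: value_iter_entry_cvg.
move=> i; have sV := proj1 (value_lim_psd i); have sRV := proj1 (Ric_psd value_lim_psd i).
apply: qform_inj => // x; apply/eqP; rewrite eq_le; apply/andP; split.
  apply: value_lim_le => N; apply: le_trans (value_iter_le_succ N i x) _.
  exact: Ric_mono (value_iter_psd N) value_lim_psd (value_iter_le_lim N) i x.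
have scaled_cvg : (1 + d N) * qform (value_lim i) x @[N --> \oo] --> qform (value_lim i) x.
  have := cvgM (cvgD (cvg_cst (1 : R)) d_cvg0) (cvg_cst (qform (value_lim i) x)).
  by rewrite addr0 mul1r; apply.
rewrite -(cvg_lim _ scaled_cvg) //; apply: limr_ge; first exact: cvgP scaled_cvg.
near=> N; apply: Ric_value_lim_le => //; near: N; exact: nbhs_infty_gt.
Unshelve. all: by end_near.
Qed.
End ValueIterationLimit.
End Riccati.

Section Lumping.
Variables (R : realType) (n p s r : nat) (Q : 'M[R]_n) (Rc : 'M[R]_p).
Variables (Abar : 'I_s -> 'M[R]_n) (Bbar : 'I_s -> 'M[R]_(n, p)) (Tbar : 'M[R]_s).
Variables (Ahat : 'I_r -> 'M[R]_n) (Bhat : 'I_r -> 'M[R]_(n, p)) (That : 'M[R]_r).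
Variable cls : 'I_s -> 'I_r.
Hypothesis Abar_lump : forall i, Abar i = Ahat (cls i).
Hypothesis Bbar_lump : forall i, Bbar i = Bhat (cls i).
Hypothesis Tbar_lump : forall i l, \sum_(j | cls j == l) Tbar i j = That (cls i) l.
Implicit Types (X : 'I_r -> 'M[R]_n) (i : 'I_s).

Lemma phi_lift X i : phi Tbar (X \o cls) i = phi That X (cls i).
Proof.
rewrite /phi (partition_big cls predT) //=; apply: eq_bigr => l _.
by rewrite -Tbar_lump scaler_suml; apply: eq_bigr => j /eqP <-.
Qed.

Lemma Ric_lift X i : Ric Abar Bbar Q Rc Tbar (X \o cls) i = Ric Ahat Bhat Q Rc That X (cls i).
Proof. by rewrite /Ric phi_lift Abar_lump Bbar_lump. Qed.

Lemma Kgain_lift X i : Kgain Abar Bbar Rc Tbar (X \o cls) i = Kgain Ahat Bhat Rc That X (cls i).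
Proof. by rewrite /Kgain phi_lift Abar_lump Bbar_lump. Qed.

Lemma riccati_sol_lift X : riccati_sol Ahat Bhat Q Rc That X ->
  riccati_sol Abar Bbar Q Rc Tbar (X \o cls).
Proof. by move=> solX i; rewrite Ric_lift /= -solX. Qed.

Lemma value_iter_lift N :
  value_iter Abar Bbar Q Rc Tbar N = value_iter Ahat Bhat Q Rc That N \o cls.
Proof. by elim: N => //= N IH; apply/funext => i; rewrite IH Ric_lift. Qed.

Section LumpedSolution.
Hypothesis Tbar_ge0 : forall i j, 0 <= Tbar i j.
Hypothesis That_ge0 : forall k l, 0 <= That k l.
Hypothesis Q_posdef : posdef Q.
Hypothesis Rc_posdef : posdef Rc.
Hypothesis cls_surj : forall k, exists i, cls i = k.

(* Reduced value iteration lifts to expanded value iteration, which [P] bounds;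
   its limit lifts to a positive semidefinite solution, hence to [P]. *)
Lemma lumped_riccati_sol P : riccati_sol Abar Bbar Q Rc Tbar P -> psd_family P ->
  exists2 V, riccati_sol Ahat Bhat Q Rc That V /\ psd_family V & P = V \o cls.
Proof.
move=> solP psdP.
have bounded k x : exists C, forall N, qform (value_iter Ahat Bhat Q Rc That N k) x <= C.
  have [i <-] := cls_surj k; exists (qform (P i) x) => N.
  by rewrite -/((_ \o cls) i) -(value_iter_lift N); apply: value_iter_le_sol.
have V_sol := value_lim_riccati That_ge0 Q_posdef Rc_posdef bounded.
have V_psd := value_lim_psd That_ge0 Q_posdef Rc_posdef bounded.
exists (value_lim Ahat Bhat Q Rc That) => //.
apply: (riccati_sol_psd_unique Tbar_ge0 Q_posdef Rc_posdef solP psdP).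
  exact: riccati_sol_lift V_sol.
by move=> i; apply: V_psd.
Qed.
End LumpedSolution.
End Lumping.

Lemma partition_class s r (Omega : 'I_r -> {set 'I_s}) : is_partition Omega ->
  exists cls : 'I_s -> 'I_r, forall i k, (i \in Omega k) = (cls i == k).
Proof.
case=> _ [disj cover]; exists (fun i => xchoose (cover i)) => i k.
have i_cls := xchooseP (cover i); apply/idP/eqP => [i_k|<- //].
by apply/eqP; apply: contraTT isT => /disj/disjointFr/(_ i_cls); rewrite i_k.
Qed.

Lemma partition_lumping (R : realType) n p s r (Omega : 'I_r -> {set 'I_s})
    (A Abar : 'I_s -> 'M[R]_n) (B Bbar : 'I_s -> 'M[R]_(n, p)) (T Tbar : 'M[R]_s) :
  is_partition Omega ->
  (forall k i, i \in Omega k -> Abar i = avg_mx Omega A k /\ Bbar i = avg_mx Omega B k) ->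
  (forall k l i, i \in Omega k -> \sum_(j in Omega l) Tbar i j = red_T Omega T k l) ->
  exists cls : 'I_s -> 'I_r,
    [/\ forall i k, (i \in Omega k) = (cls i == k),
         forall i, Abar i = avg_mx Omega A (cls i),
         forall i, Bbar i = avg_mx Omega B (cls i)
       & forall i l, \sum_(j | cls j == l) Tbar i j = red_T Omega T (cls i) l].
Proof.
move=> Omega_part ABbar Tbar_red; have [cls mem_cls] := partition_class Omega_part.
have in_cls i : i \in Omega (cls i) by rewrite mem_cls.
exists cls; split=> // [i | i | i l].
- exact: (ABbar _ _ (in_cls i)).1.
- exact: (ABbar _ _ (in_cls i)).2.
- by rewrite -(Tbar_red _ _ _ (in_cls i)); apply: eq_bigl => j; rewrite mem_cls.
Qed.

Lemma red_T_ge0 (R : realType) s r (Omega : 'I_r -> {set 'I_s}) (T : 'M[R]_s) :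
  (forall i j, 0 <= T i j) -> forall k l, 0 <= red_T Omega T k l.
Proof.
move=> T_ge0 k l; rewrite mxE mulr_ge0 ?invr_ge0 //.
by apply: sumr_ge0 => i _; apply: sumr_ge0.
Qed.

Theorem lemma3 (R : realType) (n p s r : nat)
  (A : 'I_s -> 'M[R]_n) (B : 'I_s -> 'M[R]_(n, p)) (T : 'M[R]_s)
  (Q : 'M[R]_n) (Rc : 'M[R]_p) (Omega : 'I_r -> {set 'I_s})
  (Abar : 'I_s -> 'M[R]_n) (Bbar : 'I_s -> 'M[R]_(n, p)) (Tbar : 'M[R]_s)
  (Pbar : 'I_s -> 'M[R]_n) :
  markov T ->
  is_partition Omega ->
  posdef Q -> posdef Rc ->
  (* expanded MJS *)
  (forall k i, i \in Omega k ->
     Abar i = avg_mx Omega A k /\ Bbar i = avg_mx Omega B k) ->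
  markov Tbar ->
  (forall k l i, i \in Omega k ->
     \sum_(j in Omega l) Tbar i j = red_T Omega T k l) ->
  (* a positive definite Riccati solution of the expanded MJS *)
  riccati_sol Abar Bbar Q Rc Tbar Pbar ->
  (forall i, posdef (Pbar i)) ->
  exists Phat : 'I_r -> 'M[R]_n,
    [/\ (forall k, possemidef (Phat k)),
        riccati_sol (avg_mx Omega A) (avg_mx Omega B) Q Rc (red_T Omega T) Phat,
        (forall Phat' : 'I_r -> 'M[R]_n,
           (forall k, possemidef (Phat' k)) ->
           riccati_sol (avg_mx Omega A) (avg_mx Omega B) Q Rc (red_T Omega T) Phat' ->
           forall k, Phat' k = Phat k)
      & (forall k i, i \in Omega k ->
           Phat k = Pbar i /\
           Kgain (avg_mx Omega A) (avg_mx Omega B) Rc (red_T Omega T) Phat k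
             = Kgain Abar Bbar Rc Tbar Pbar i)].
Proof.
move=> [T_ge0 _] Omega_part Q_pd Rc_pd ABbar [Tbar_ge0 _] Tbar_red Pbar_sol Pbar_pd.
have [cls [mem_cls lump_A lump_B lump_T]] := partition_lumping Omega_part ABbar Tbar_red.
have cls_surj k : exists i, cls i = k.
  by have /set0Pn [i] := proj1 Omega_part k; rewrite mem_cls => /eqP; exists i.
have That_ge0 := red_T_ge0 Omega T_ge0.
have [V [V_sol V_psd] Pbar_lift] := lumped_riccati_sol lump_A lump_B lump_T
  Tbar_ge0 That_ge0 Q_pd Rc_pd cls_surj Pbar_sol (fun i => posdef_possemidef (Pbar_pd i)).
exists V; split => //.
- move=> P P_psd P_sol k.
  by rewrite (riccati_sol_psd_unique That_ge0 Q_pd Rc_pd P_sol P_psd V_sol V_psd).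
- move=> k i; rewrite mem_cls => /eqP <-.
  by rewrite Pbar_lift (Kgain_lift Rc lump_A lump_B lump_T).
Qed.
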